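(* Let $\alpha\in\mathbb{R}$ be transcendental over $\mathbb{Q}$ and let $\mathbb{Q}(\alpha)^+=H_1\sqcup\cdots\sqcup H_k$ ($k$ finite) be a partition into pairwise disjoint nonempty subsets, each closed under addition and multiplication. Consider the set $L$ of elements $a\alpha+b>0$ with $a,b\in\mathbb{Q}$, $a\neq 0$. Then $L$ meets at most two of the sets $H_i$; and if it meets two of them, then two elements $a\alpha+b$ and $a'\alpha+b'$ of $L$ lie in the same $H_i$ if and only if $a$ and $a'$ have the same sign. *)

From HB Require Import structures.
From mathcomp Require Import all_boot all_order all_algebra.
From mathcomp Require Import reals.
Set Implicit Arguments. Unset Strict Implicit. Unset Printing Implicit Defensive.
Import Order.TTheory GRing.Theory Num.Theory.
Local Open Scope ring_scope.

Definition qeval (R : realType) (p : {poly rat}) (x : R) : R :=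
  (map_poly (@ratr R) p).[x].

Definition transcendental (R : realType) (alpha : R) : Prop :=
  forall p : {poly rat}, p != 0 -> qeval p alpha != 0.

Definition in_Qalpha (R : realType) (alpha x : R) : Prop :=
  exists p q : {poly rat}, qeval q alpha != 0 /\ x = qeval p alpha / qeval q alpha.

Definition in_Qalpha_pos (R : realType) (alpha x : R) : Prop :=
  in_Qalpha alpha x /\ 0 < x.

Definition semiring_partition (R : realType) (alpha : R) (k : nat)
    (H : 'I_k -> R -> Prop) : Prop :=
  [/\ forall i, exists x, H i x,
      forall i j x, H i x -> H j x -> i = j,
      forall x, in_Qalpha_pos alpha x <-> exists i, H i x,
      forall i x y, H i x -> H i y -> H i (x + y)
    & forall i x y, H i x -> H i y -> H i (x * y)].

Definition in_L (R : realType) (alpha x : R) : Prop :=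
  exists a b : rat, a != 0 /\ x = ratr a * alpha + ratr b /\ 0 < x.

Definition meets_L (R : realType) (alpha : R) (S : R -> Prop) : Prop :=
  exists x, in_L alpha x /\ S x.

From HB Require Import structures.
From mathcomp Require Import all_boot all_order all_algebra.
From mathcomp Require Import boolp reals ring lra.
Import Order.TTheory GRing.Theory Num.Theory.
Local Open Scope ring_scope.

(* Each class H_i is closed under multiplication by positive rationals: x / d
   lies in some class, and adding d copies of it gives back x.  On a line
   b + Q inside Q(alpha) the classes are therefore convex, and the identity
   (b + f)^2 = (b + e)^2 + 2 (f - e) (b + (e + f) / 2) shows that a class
   containing b + e and the midpoint also contains b + f.  Among k + 1 positive
   points below b + e two share a class, and repeated halving shows that this
   class contains every point of the line to the right of the smaller one; so
   all positive points of the line lie in one class.  Rescaling by a / a' > 0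
   moves a' alpha + b' onto the line a alpha + Q, and there are only two signs. *)

Section SemiringPartition.

Context {R : realType} {k : nat} {H : 'I_k -> R -> Prop} {M : R -> Prop}.

Hypothesis H_disj : forall {i j x}, H i x -> H j x -> i = j.
Hypothesis H_cover : forall x, M x /\ 0 < x <-> exists i, H i x.
Hypothesis H_add : forall {i x y}, H i x -> H i y -> H i (x + y).
Hypothesis H_mul : forall {i x y}, H i x -> H i y -> H i (x * y).
Hypothesis M_scale : forall (q : rat) x, M x -> M (ratr q * x).

Lemma H_mulrn i x n : H i x -> (0 < n)%N -> H i (x *+ n).
Proof.
move=> Hx; case: n => // n _; elim: n => [|n IHn]; first by rewrite mulr1n.
by rewrite mulrS; apply: H_add.
Qed.

Lemma H_divrn i x d : H i x -> (0 < d)%N -> H i (x / d%:R).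
Proof.
move=> Hx d_gt0; have [Mx x_gt0] := (H_cover x).2 (ex_intro _ i Hx).
have My : M (x / d%:R) by rewrite mulrC -(ratr_nat R) -fmorphV; apply: M_scale.
have d_pos : 0 < d%:R :> R by rewrite ltr0n.
have [l Hl] := (H_cover _).1 (conj My (divr_gt0 x_gt0 d_pos)).
suff -> : i = l by [].
apply: H_disj Hx _; rewrite -[x](divfK (lt0r_neq0 d_pos)) mulr_natr.
exact: H_mulrn.
Qed.

Lemma H_scale {i x} {q : rat} : H i x -> 0 < q -> H i (ratr q * x).
Proof.
move=> Hx; case: (ratP q) => n d _.
case: n => n; last by rewrite ltr_pdivlMr // mul0r ltr0z.
rewrite pmulr_lgt0 ?invr_gt0 // ltr0z ltz_nat => n_gt0.
rewrite fmorph_div /= ratr_int ratr_nat -mulrA [_^-1 * _]mulrC mulr_natl.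
by apply: H_mulrn => //; apply: H_divrn.
Qed.

Lemma class_collision {x : 'I_k.+1 -> R} : (forall r, M (x r) /\ 0 < x r) ->
  exists l (r1 r2 : 'I_k.+1), [/\ (r1 < r2)%N, H l (x r1) & H l (x r2)].
Proof.
move=> x_pos; have [c Hc] := choice (fun r => (H_cover _).1 (x_pos r)).
have /injectivePn [r1 [r2 ne12 c12]] : ~~ injectiveb c.
  by apply/negP => /injectiveP/leq_card; rewrite !card_ord ltnn.
have := Hc r1; rewrite c12 => Hr1.
case: (ltngtP r1 r2) ne12 => [lt12|gt12|/val_inj->]; last by rewrite eqxx.
  by exists (c r2), r1, r2.
by exists (c r2), r2, r1.
Qed.

Context {b : R}.
Hypothesis M_line : forall e : rat, M (b + ratr e).

Local Notation pt e := (b + ratr e).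

Lemma line_convex {l} {e h g : rat} : e < h -> h < g ->
  H l (pt e) -> H l (pt g) -> H l (pt h).
Proof.
move=> eh hg He Hg; have eg := lt_trans eh hg.
have eg_R : ratr e < ratr g :> R by rewrite ltr_rat.
have -> : pt h = ratr ((g - h) / (g - e)) * pt e + ratr ((h - e) / (g - e)) * pt g.
  by rewrite !(rmorphB, fmorph_div) /=; field; rewrite subr_eq0 gt_eqF.
by apply: H_add; apply: H_scale => //; rewrite divr_gt0 ?subr_gt0.
Qed.

Lemma line_midpoint {i j} {e f : rat} : e < f ->
  H i (pt e) -> H j (pt f) -> H i (pt ((e + f) / 2)) -> i = j.
Proof.
move=> ef He Hf Hm; apply: H_disj (H_mul Hf Hf).
have -> : pt f * pt f = pt e * pt e + ratr (2 * (f - e)) * pt ((e + f) / 2).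
  by rewrite !(rmorphD, rmorphB, rmorphM, fmorph_div, ratr_nat) /=; field.
by apply: H_add (H_mul He He) _; apply: H_scale; rewrite ?mulr_gt0 ?subr_gt0.
Qed.

Lemma line_class_ray {l m} {g h q : rat} : g < h -> g < q ->
  H l (pt g) -> H l (pt h) -> H m (pt q) -> m = l.
Proof.
move=> gh gq Hg Hh; have gh_pos : 0 < h - g by rewrite subr_gt0.
have [n] : exists n, q - g < (h - g) * 2 ^+ n.
  have X_ge0 : 0 <= (q - g) / (h - g) by rewrite divr_ge0 ?subr_ge0 ?ltW.
  exists (Num.bound ((q - g) / (h - g))); rewrite mulrC -ltr_pdivrMr //.
  apply: lt_le_trans (archi_boundP X_ge0) _.
  by rewrite -natrX ler_nat ltnW // ltn_expl.
(* Induction on the number of halvings of ]g, q[ needed to land inside ]g, h[. *)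
elim: n q m gq => [|n IHn] q m gq qn Hq.
  rewrite expr0 mulr1 ltrD2r in qn.
  exact: H_disj Hq (line_convex gq qn Hg Hh).
have g_pos : 0 < pt g by have [] := (H_cover _).2 (ex_intro _ l Hg).
have gs : g < (g + q) / 2 by rewrite ltr_pdivlMr //; lra.
have s_pos : 0 < pt ((g + q) / 2) by rewrite (lt_trans g_pos) // ltrD2l ltr_rat.
have [m' Hs] := (H_cover _).1 (conj (M_line _) s_pos).
apply/esym/(line_midpoint gq Hg Hq); rewrite -(IHn _ m' gs _ Hs) //.
by move: qn; rewrite exprS mulrCA; lra.
Qed.

Lemma line_class_const {i j} {e f : rat} : H i (pt e) -> H j (pt f) -> i = j.
Proof.
wlog ef : i j e f / e <= f.
  move=> wlog He Hf; have [ef|/ltW fe] := leP e f; first exact: wlog He Hf.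
  exact/esym/(wlog _ _ _ _ fe Hf He).
move=> He Hf; have e_pos : 0 < pt e by have [] := (H_cover _).2 (ex_intro _ i He).
have [c] : exists c : rat, ratr c \in `]- b, ratr e[ by apply: rat_in_itvoo; lra.
rewrite in_itv /= => /andP[bc]; rewrite ltr_rat => ce.
have c_pos : 0 < pt c by lra.
have ce_pos : 0 < e - c by rewrite subr_gt0.
pose p (r : 'I_k.+1) := e - (e - c) / r.+1%:R.
have p_pos r : M (pt (p r)) /\ 0 < pt (p r).
  split; first exact: M_line.
  apply: lt_le_trans c_pos _; rewrite lerD2l ler_rat lerBrDl -lerBrDr.
  by rewrite ler_pdivrMr // ler_pMr // ler1n.
have [l [r1 [r2 [lt12 H1 H2]]]] := class_collision p_pos.
have p12 : p r1 < p r2.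
  by rewrite ltrD2l ltrN2 ltr_pM2l // ltf_pV2 ?posrE // ltr_nat.
have p2e : p r2 < e by rewrite ltrBlDr ltrDl divr_gt0.
rewrite (line_class_ray p12 _ H1 H2 He) ?(line_class_ray p12 _ H1 H2 Hf) //.
  exact: (lt_trans p12 (lt_le_trans p2e ef)).
exact: (lt_trans p12 p2e).
Qed.

End SemiringPartition.

Lemma same_sign_divr_gt0 {F : realFieldType} {x y : F} :
  x != 0 -> y != 0 -> (0 < x) = (0 < y) -> 0 < x / y.
Proof.
move=> x0 y0; case: (ltP 0 x) => [x_gt0 /esym y_gt0 | x_le0 /esym/negbT].
  exact: divr_gt0.
rewrite -leNgt => y_le0; rewrite -divrNN divr_gt0 // oppr_gt0 lt_neqAle ?x0 ?y0 //.
Qed.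

Lemma Qalpha_scale {R : realType} (alpha : R) (q : rat) (x : R) :
  in_Qalpha alpha x -> in_Qalpha alpha (ratr q * x).
Proof.
case=> [p [p' [p'0 ->]]]; exists (q%:P * p), p'; split => //.
by rewrite /qeval rmorphM /= map_polyC hornerM hornerC mulrA.
Qed.

Lemma Qalpha_line {R : realType} (alpha : R) (a e : rat) :
  in_Qalpha alpha (ratr a * alpha + ratr e).
Proof.
exists (a%:P * 'X + e%:P), 1; rewrite /qeval rmorph1 hornerC divr1 oner_neq0.
by rewrite rmorphD rmorphM /= !map_polyC map_polyX hornerD hornerM hornerX !hornerC.
Qed.

Lemma same_sign_same_class {R : realType} {alpha : R} {k : nat}
    {H : 'I_k -> R -> Prop} (hpart : semiring_partition alpha H)
    {i j : 'I_k} {a b a' b' : rat} :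
  a != 0 -> a' != 0 -> (0 < a) = (0 < a') ->
  H i (ratr a * alpha + ratr b) -> H j (ratr a' * alpha + ratr b') -> i = j.
Proof.
move=> a0 a'0 sa Hi Hj; have [_ disj cover add mul] := hpart.
have := H_scale disj cover add (Qalpha_scale alpha) Hj (same_sign_divr_gt0 a0 a'0 sa).
have -> : ratr (a / a') * (ratr a' * alpha + ratr b') =
          ratr a * alpha + ratr (a / a' * b') :> R.
  by rewrite !(rmorphM, fmorphV) /=; field; rewrite fmorph_eq0.
exact: (line_class_const disj cover add mul (Qalpha_scale alpha) (Qalpha_line alpha a) Hi).
Qed.

Theorem corollary3p2 (R : realType) (alpha : R) (k : nat)
    (H : 'I_k -> R -> Prop) :
  transcendental alpha ->
  semiring_partition alpha H ->
  (forall i j l : 'I_k, meets_L alpha (H i) -> meets_L alpha (H j) ->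
     meets_L alpha (H l) -> i = j \/ j = l \/ i = l) /\
  ((exists i j : 'I_k, i <> j /\ meets_L alpha (H i) /\ meets_L alpha (H j)) ->
   forall a b a' b' : rat, a != 0 -> a' != 0 ->
     0 < ratr a * alpha + ratr b -> 0 < ratr a' * alpha + ratr b' ->
     ((exists i : 'I_k, H i (ratr a * alpha + ratr b) /\
                        H i (ratr a' * alpha + ratr b'))
      <-> ((0 < a) = (0 < a')))).
Proof.
move=> _ hpart; split.
  move=> i j l [_ [[a [b [a0 [-> _]]]] Hi]] [_ [[a' [b' [a'0 [-> _]]]] Hj]].
  move=> [_ [[a'' [b'' [a''0 [-> _]]]] Hl]].
  have : [|| (0 < a) == (0 < a'), (0 < a') == (0 < a'') | (0 < a) == (0 < a'')].
    by case: (0 < a) (0 < a') (0 < a'') => [] [] [].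
  case/or3P => /eqP s; [left | right; left | right; right].
  - exact: (same_sign_same_class hpart a0 a'0 s Hi Hj).
  - exact: (same_sign_same_class hpart a'0 a''0 s Hj Hl).
  - exact: (same_sign_same_class hpart a0 a''0 s Hi Hl).
move=> [i0 [j0 [ne [[_ [[c [d [c0 [-> _]]]] H0]] [_ [[c' [d' [c'0 [-> _]]]] H1]]]]]].
move=> a b a' b' a0 a'0 pos pos'; split=> [[m [Hm Hm']] | s].
  apply/eqP/contraT => sa; case: ne.
  have class_m (e f : rat) l : e != 0 -> H l (ratr e * alpha + ratr f) -> l = m.
    move=> e0 Hl; have : ((0 < e) == (0 < a)) || ((0 < e) == (0 < a')).
      by move: sa; case: (0 < e) (0 < a) (0 < a') => [] [] [].
    case/orP => /eqP s.
    - exact: (same_sign_same_class hpart e0 a0 s Hl Hm).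
    - exact: (same_sign_same_class hpart e0 a'0 s Hl Hm').
  by rewrite (class_m _ _ _ c0 H0) (class_m _ _ _ c'0 H1).
have [_ _ cover _ _] := hpart.
have [i Hi] := (cover _).1 (conj (Qalpha_line alpha a b) pos).
have [j Hj] := (cover _).1 (conj (Qalpha_line alpha a' b') pos').
by exists i; split; last rewrite (same_sign_same_class hpart a0 a'0 s Hi Hj).
Qed.
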